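(* Let $\{\Lambda_{t,t'}\}_{t\ge t'\ge0}$ be completely positive trace-preserving linear maps on operators of $\mathcal H_E$ satisfying $\Lambda_{t,t'}\Lambda_{t',t''}=\Lambda_{t,t''}$ for $t\ge t'\ge t''$ and $\Lambda_{t,t}=\mathrm{id}$. Define the modified quasi-probabilities $\tilde q^{(k)}$ below. Then: (i) $\tilde q^{(k)}$ satisfy the Chapman–Kolmogorov consistency criterion: for $k\ge2$, $1\le l\le k$, $\sum_{\xi_l,\eta_l\in\Omega_{\hat V}}\tilde q^{(k)}(\boldsymbol\xi\boldsymbol\eta\mathbf t)=\tilde q^{(k-1)}$ with the $l$-th triple $(\xi_l,\eta_l,t_l)$ removed, and $\sum_{\xi_1,\eta_1}\tilde q^{(1)}=1$. (ii) If moreover, for all $t\ge t'$, $\Lambda_{t,t'}(|n\rangle\langle n|)\in\mathrm{span}\{|m\rangle\langle m|\}_m$ for every $n$ and $\Lambda_{t,t'}(|n\rangle\langle n'|)\in\mathrm{span}\{|m\rangle\langle m'|: m\ne m'\}$ for every $n\ne n'$, then $\tilde q^{(k)}(\boldsymbol\xi\boldsymbol\eta\mathbf t)=\delta_{\boldsymbol\xi,\boldsymbol\eta}\tilde p^{(k)}(\boldsymbol\xi\mathbf t)$ for all $k$, where $$\tilde p^{(k)}(\boldsymbol\xi\mathbf t)=\Big(\prod_{l=1}^k\sum_{n_l:v_{n_l}=\xi_l}\Big)\langle n_k|\Lambda_{t_k,0}\hat\rho_E|n_k\rangle\prod_{l=1}^{k-1}\langle n_l|\Lambda_{t_l,t_{l+1}}(|n_{l+1}\rangle\langle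 n_{l+1}|)|n_l\rangle\ \ge0,$$ and $\{\tilde p^{(k)}\}_{k\ge1}$ is a consistent family of joint probability distributions (defining a stochastic process with values in $\Omega_{\hat V}$).
   Context: $\mathcal H_E$ finite-dimensional, $\hat V_E=\sum_n v_n|n\rangle\langle n|$ with a fixed orthonormal eigenbasis $\{|n\rangle\}$, $\Omega_{\hat V}$ its set of distinct eigenvalues, $\hat\rho_E$ a density matrix. Modified propagators: $T_{t,t'}(nm|n'm')=\mathrm{tr}_E\big(|m\rangle\langle n|\,\Lambda_{t,t'}(|n'\rangle\langle m'|)\big)$. For $k\ge1$, $t_1>\dots>t_k\ge0$: $$\tilde q^{(k)}(\boldsymbol\xi\boldsymbol\eta\mathbf t)=\Big(\prod_{l=1}^k\sum_{n_l:\,v_{n_l}=\xi_l}\ \sum_{m_l:\,v_{m_l}=\eta_l}\Big)\delta_{n_1,m_1}\langle n_k|\Lambda_{t_k,0}\hat\rho_E|m_k\rangle\prod_{l=1}^{k-1}T_{t_l,t_{l+1}}(n_lm_l|n_{l+1}m_{l+1}).$$ $\delta_{\boldsymbol\xi,\boldsymbol\eta}=\prod_l\delta_{\xi_l,\eta_l}$. *)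

From HB Require Import structures.
From mathcomp Require Import all_boot all_order all_algebra.
Set Implicit Arguments. Unset Strict Implicit. Unset Printing Implicit Defensive.
Import Order.TTheory GRing.Theory Num.Theory.
Local Open Scope ring_scope.

(* Scalars: C : numClosedFieldType (complex numbers, e.g. algC).
   Times: an arbitrary real field R (only the order on times matters).
   H_E = C^d, with the fixed orthonormal eigenbasis of V_E being the
   standard basis |n>, n : 'I_d.  |m><n| is delta_mx m n.              *)

Section Defs.
Variables (C : numClosedFieldType) (R : realFieldType) (d : nat).
Local Notation Mx := 'M[C]_d.

Definition psdf (I : finType) (X : I -> I -> C) : Prop :=
  forall x : I -> C, 0 <= \sum_(i : I) \sum_(j : I) (x i)^* * X i j * x j.

Definition density (rho : Mx) : Prop :=
  psdf (fun i j : 'I_d => rho i j) /\ \tr rho = 1.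

(* (id_m (x) L) acting on operators on C^m (x) H_E *)
Definition ampl (m : nat) (L : Mx -> Mx) (X : 'I_m * 'I_d -> 'I_m * 'I_d -> C) :=
  fun p q : 'I_m * 'I_d => L (\matrix_(a, b) X (p.1, a) (q.1, b)) p.2 q.2.

Definition completely_positive (L : Mx -> Mx) : Prop :=
  forall (m : nat) (X : 'I_m * 'I_d -> 'I_m * 'I_d -> C),
    psdf X -> psdf (ampl L X).

Definition linear_map (L : Mx -> Mx) : Prop :=
  forall (a : C) (A B : Mx), L (a *: A + B) = a *: L A + L B.

Definition trace_preserving (L : Mx -> Mx) : Prop :=
  forall A : Mx, \tr (L A) = \tr A.

Definition dyn_family (Lam : R -> R -> Mx -> Mx) : Prop :=
  (forall t t' : R, 0 <= t' -> t' <= t ->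
     [/\ linear_map (Lam t t'), completely_positive (Lam t t')
       & trace_preserving (Lam t t')]) /\
  (forall t t' t'' : R, 0 <= t'' -> t'' <= t' -> t' <= t ->
     forall A : Mx, Lam t t' (Lam t' t'' A) = Lam t t'' A) /\
  (forall t : R, 0 <= t -> forall A : Mx, Lam t t A = A).

Definition dephasing (Lam : R -> R -> Mx -> Mx) : Prop :=
  forall t t' : R, 0 <= t' -> t' <= t ->
    (forall n : 'I_d, is_diag_mx (Lam t t' (delta_mx n n))) /\
    (forall n n' : 'I_d, n != n' -> forall m : 'I_d, Lam t t' (delta_mx n n') m m = 0).

(* the set of distinct eigenvalues of V_E *)
Definition Omega (v : 'I_d -> C) : seq C := undup [seq v i | i <- enum 'I_d].

Definition Tprop (Lam : R -> R -> Mx -> Mx) (t t' : R) (n m n' m' : 'I_d) : C :=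
  \tr (delta_mx m n *m Lam t t' (delta_mx n' m')).

(* time arguments t_1 > ... > t_k >= 0, with k = k'.+1, index l-1 : 'I_k *)
Definition times_ok (k : nat) (t : 'I_k.+1 -> R) : Prop :=
  (forall i j : 'I_k.+1, (i < j)%N -> t j < t i) /\ 0 <= t ord_max.

Definition qtilde (Lam : R -> R -> Mx -> Mx) (v : 'I_d -> C) (rho : Mx) (k : nat)
    (xi eta : 'I_k.+1 -> C) (t : 'I_k.+1 -> R) : C :=
  \sum_(n : {ffun 'I_k.+1 -> 'I_d} | [forall l, v (n l) == xi l])
  \sum_(m : {ffun 'I_k.+1 -> 'I_d} | [forall l, v (m l) == eta l])
    ((n ord0 == m ord0)%:R * Lam (t ord_max) 0 rho (n ord_max) (m ord_max) *
     \prod_(l < k) Tprop Lam (t (widen_ord (leqnSn k) l)) (t (lift ord0 l))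
                      (n (widen_ord (leqnSn k) l)) (m (widen_ord (leqnSn k) l))
                      (n (lift ord0 l)) (m (lift ord0 l))).

Definition ptilde (Lam : R -> R -> Mx -> Mx) (v : 'I_d -> C) (rho : Mx) (k : nat)
    (xi : 'I_k.+1 -> C) (t : 'I_k.+1 -> R) : C :=
  \sum_(n : {ffun 'I_k.+1 -> 'I_d} | [forall l, v (n l) == xi l])
    (Lam (t ord_max) 0 rho (n ord_max) (n ord_max) *
     \prod_(l < k) Lam (t (widen_ord (leqnSn k) l)) (t (lift ord0 l))
                      (delta_mx (n (lift ord0 l)) (n (lift ord0 l)))
                      (n (widen_ord (leqnSn k) l)) (n (widen_ord (leqnSn k) l))).

End Defs.

Definition upd (T : Type) (k : nat) (f : 'I_k -> T) (l : 'I_k) (a : T) : 'I_k -> T :=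
  fun j => if j == l then a else f j.

From HB Require Import structures.
From mathcomp Require Import all_boot all_order all_algebra.
From mathcomp Require Import zify.
Import Order.TTheory GRing.Theory Num.Theory.
Local Open Scope ring_scope.
Set Implicit Arguments. Unset Strict Implicit. Unset Printing Implicit Defensive.

(* Read from the latest time backwards, the sums over n and m in [qtilde] are the
   matrix entries of a nested expression: [qtilde] is the trace of
     P_{ξ1} Λ_{t1,t2}(P_{ξ2} ⋯ P_{ξk} Λ_{tk,0}(ρ) P_{ηk} ⋯ P_{η2}) P_{η1},
   where P_x is the spectral projector of V_E for the eigenvalue x.  Summing over
   (ξ_l, η_l) replaces P_{ξl} and P_{ηl} by the identity, since the projectors
   resolve it; the two maps around them then merge by the composition law, or,
   for l = 1, disappear under the trace by trace preservation.  Under the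
   dephasing hypothesis a term with n ≠ m vanishes at the first index where n and
   m differ, so [qtilde] is diagonal in (ξ, η); its diagonal is [ptilde], which is
   nonnegative by complete positivity and consistent by the first part. *)

Lemma sum_indicator_seq (S : pzSemiRingType) (T : eqType) (r : seq T) (a : T)
    (F : T -> S) :
  uniq r -> a \in r -> \sum_(b <- r) (a == b)%:R * F b = F a.
Proof.
move=> ur ar; rewrite (bigD1_seq a) //= eqxx mul1r big1 ?addr0 // => b.
by rewrite eq_sym => /negbTE->; rewrite mul0r.
Qed.

Lemma sum_diagonal_seq (S : pzSemiRingType) (T : eqType) (r : seq T)
    (F : T -> T -> S) (G : T -> S) :
  uniq r -> (forall a b, F a b = (a == b)%:R * G a) ->
  \sum_(a <- r) \sum_(b <- r) F a b = \sum_(a <- r) G a.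
Proof.
move=> ur FG; apply: eq_big_seq => a ar.
by under eq_bigr => b _ do rewrite FG; rewrite (sum_indicator_seq (fun=> G a)).
Qed.

Definition eigenproj (S : pzSemiRingType) (T : eqType) d (v : 'I_d -> T) (x : T) :
  'M[S]_d := \matrix_(i, j) ((i == j) && (v i == x))%:R.

Section Eigenprojector.
Variables (S : pzSemiRingType) (T : eqType) (d : nat) (v : 'I_d -> T).

Lemma eigenproj_mull x (Y : 'M[S]_d) a b :
  (eigenproj S v x *m Y) a b = (v a == x)%:R * Y a b.
Proof.
rewrite mxE (bigD1 a) //= big1 ?addr0 => [|c /negbTE ca]; rewrite mxE ?eqxx //.
by rewrite eq_sym ca mul0r.
Qed.

Lemma eigenproj_mulr x (Y : 'M[S]_d) a b :
  (Y *m eigenproj S v x) a b = Y a b * (v b == x)%:R.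
Proof.
rewrite mxE (bigD1 b) //= big1 ?addr0 => [|c /negbTE cb]; rewrite mxE ?eqxx //.
by rewrite cb mulr0.
Qed.

End Eigenprojector.

Lemma mem_Omega (C : numClosedFieldType) d (v : 'I_d -> C) n : v n \in Omega v.
Proof. by rewrite mem_undup map_f ?mem_enum. Qed.

Lemma sum_eigenproj (C : numClosedFieldType) d (v : 'I_d -> C) :
  \sum_(x <- Omega v) eigenproj C v x = 1%:M.
Proof.
apply/matrixP => i j; rewrite summxE mxE; under eq_bigr do rewrite mxE.
case: eqP => [->|_] /=; last by rewrite big1.
rewrite -[RHS](sum_indicator_seq (fun=> 1) (undup_uniq _) (mem_Omega v j)).
by apply: eq_bigr => x _; rewrite mulr1.
Qed.

Section LinearMap.
Variables (C : numClosedFieldType) (d : nat) (L : 'M[C]_d -> 'M[C]_d).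
Hypothesis linL : linear_map L.

Lemma linear_mapD A B : L (A + B) = L A + L B.
Proof. by have := linL 1 A B; rewrite !scale1r. Qed.

Lemma linear_map0 : L 0 = 0.
Proof. by apply/(addrI (L 0)); rewrite -linear_mapD !addr0. Qed.

Lemma linear_mapZ c A : L (c *: A) = c *: L A.
Proof. by rewrite -[c *: A]addr0 linL linear_map0 addr0. Qed.

Lemma linear_map_sum (I : Type) (r : seq I) (P : pred I) (F : I -> 'M[C]_d) :
  L (\sum_(i <- r | P i) F i) = \sum_(i <- r | P i) L (F i).
Proof. exact: (big_morph L linear_mapD linear_map0). Qed.

Lemma linear_map_entry Z i j :
  L Z i j = \sum_a \sum_b Z a b * L (delta_mx a b) i j.
Proof.
rewrite {1}(matrix_sum_delta Z) linear_map_sum summxE.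
apply: eq_bigr => a _; rewrite linear_map_sum summxE; apply: eq_bigr => b _.
by rewrite linear_mapZ mxE.
Qed.

Lemma linear_map_proj_entry (T : eqType) (v : 'I_d -> T) x y (Y : 'M[C]_d) i j :
  L (eigenproj C v x *m Y *m eigenproj C v y) i j =
  \sum_(a | v a == x) \sum_(b | v b == y) Y a b * L (delta_mx a b) i j.
Proof.
rewrite linear_map_entry [RHS]big_mkcond; apply: eq_bigr => a _.
under eq_bigr do rewrite eigenproj_mulr eigenproj_mull.
case: (v a == x); last by rewrite big1 // => b _; rewrite !mul0r.
rewrite [RHS]big_mkcond; apply: eq_bigr => b _; rewrite mul1r.
by case: (v b == y); rewrite ?mulr1 ?mulr0 ?mul0r.
Qed.

End LinearMap.

Lemma mxtrace_delta (S : pzSemiRingType) d (a b : 'I_d) :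
  \tr (delta_mx a b : 'M[S]_d) = (a == b)%:R.
Proof.
rewrite /mxtrace (bigD1 a) //= big1 ?addr0 => [|i /negbTE ia]; rewrite mxE.
  by rewrite eqxx eq_sym.
by rewrite ia.
Qed.

Lemma mxtrace_delta_mul (S : comPzSemiRingType) d (a b : 'I_d) (X : 'M[S]_d) :
  \tr (delta_mx a b *m X) = X b a.
Proof.
rewrite /mxtrace (bigD1 a) //= big1 ?addr0 => [|i /negbTE ia]; rewrite mxE.
  rewrite (bigD1 b) //= big1 ?addr0 => [|j /negbTE jb]; rewrite mxE ?eqxx ?mul1r //.
  by rewrite jb andbF mul0r.
by rewrite big1 // => j _; rewrite mxE ia mul0r.
Qed.

Lemma TpropE (C : numClosedFieldType) (R : realFieldType) d
    (Lam : R -> R -> 'M[C]_d -> 'M[C]_d) t t' n m n' m' :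
  Tprop Lam t t' n m n' m' = Lam t t' (delta_mx n' m') n m.
Proof. exact: mxtrace_delta_mul. Qed.

Section Positivity.
Variables (C : numClosedFieldType) (d : nat).

Lemma psdf_diag_ge0 (I : finType) (X : I -> I -> C) i : psdf X -> 0 <= X i i.
Proof.
move=> /(_ (fun j => (j == i)%:R)); rewrite (bigD1 i) //= [X in _ + X]big1 => [|j ji].
  rewrite (bigD1 i) //= big1 => [|k /negbTE->]; last by rewrite mulr0.
  by rewrite eqxx conjC1 mul1r mulr1 !addr0.
by rewrite big1 // => k _; rewrite (negbTE ji) conjC0 !mul0r.
Qed.

Lemma psdf_delta (n : 'I_d) : psdf (fun i j => (delta_mx n n : 'M[C]_d) i j).
Proof.
move=> x; rewrite (bigD1 n) //= [X in _ + X]big1 => [|i /negbTE ni].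
  rewrite (bigD1 n) //= big1 => [|j /negbTE nj]; last by rewrite mxE nj andbF mulr0 mul0r.
  by rewrite mxE eqxx mulr1 !addr0 mulrC -normCK exprn_ge0.
by rewrite big1 // => j _; rewrite mxE ni mulr0 mul0r.
Qed.

Lemma psdf_ampl1 (M : 'M[C]_d) :
  psdf (fun i j => M i j) -> psdf (fun p q : 'I_1 * 'I_d => M p.2 q.2).
Proof.
have sum1 (F : 'I_1 * 'I_d -> C) : \sum_p F p = \sum_j F (ord0, j).
  rewrite (eq_bigr (fun p => F (p.1, p.2))); last by case.
  by rewrite -(pair_bigA _ (fun i j => F (i, j))) big_ord1.
by move=> psdM x; rewrite sum1; under eq_bigr do rewrite sum1; apply: psdM.
Qed.

Lemma cp_diag_ge0 (L : 'M[C]_d -> 'M[C]_d) (M : 'M[C]_d) n :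
  completely_positive L -> psdf (fun i j => M i j) -> 0 <= L M n n.
Proof.
move=> cpL psdM; have := psdf_diag_ge0 (ord0, n) (cpL 1%N _ (psdf_ampl1 psdM)).
by rewrite /ampl; congr (_ <= L _ _ _); apply/matrixP => a b; rewrite mxE.
Qed.

End Positivity.

Lemma ltn_lift n (l : 'I_n.+1) (i j : 'I_n) : (i < j)%N -> (lift l i < lift l j)%N.
Proof. by rewrite /= /bump; case: (leqP l i); case: (leqP l j); lia. Qed.

Section TimeOrder.
Variable R : realFieldType.

Fixpoint chronological (ts : seq R) (tp : R) : Prop :=
  if ts is t :: ts' then t <= tp /\ chronological ts' t else 0 <= tp.

Lemma chronological_ge0 ts tp : chronological ts tp -> 0 <= tp.
Proof. by elim: ts tp => [//|t ts IH] tp /= [/(le_trans (IH _ _))]; apply. Qed.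

Variables (k : nat) (t : 'I_k.+1 -> R).
Hypothesis okt : times_ok t.

Lemma times_ok_le (i j : 'I_k.+1) : (i <= j)%N -> t j <= t i.
Proof.
rewrite leq_eqVlt => /orP[/eqP/val_inj->//|ij].
by apply: ltW; case: okt => + _; apply.
Qed.

Lemma times_ok_ge0 i : 0 <= t i.
Proof. by case: okt => _ /le_trans; apply; apply: times_ok_le; apply: leq_ord. Qed.

End TimeOrder.

Lemma times_ok_lift (R : realFieldType) k (t : 'I_k.+2 -> R) (l : 'I_k.+2) :
  times_ok t -> times_ok (fun j => t (lift l j)).
Proof.
move=> okt; split; last exact: times_ok_ge0.
by move=> i j /(ltn_lift l); case: okt => + _; apply.
Qed.

Lemma nth_map_enum (T : Type) (x0 : T) n (g : 'I_n.+1 -> T) i :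
  (i < n.+1)%N -> nth x0 [seq g j | j <- enum 'I_n.+1] i = g (inord i).
Proof.
move=> ilt; rewrite (nth_map ord0) ?size_enum_ord //; congr g.
by apply: val_inj; rewrite /= nth_enum_ord ?inordK.
Qed.

Section Splice.
Variables (T : Type) (k : nat) (l : 'I_k.+2) (g : 'I_k.+2 -> T).
Let S := [seq g j | j <- enum 'I_k.+2].

Lemma map_enum_splice : S = take l S ++ g l :: drop l.+1 S.
Proof.
rewrite -{1}(cat_take_drop l S) (drop_nth (g l)); last by rewrite size_map size_enum_ord.
by rewrite (nth_map l) ?size_enum_ord // nth_ord_enum.
Qed.

Lemma map_enum_lift : [seq g (lift l j) | j <- enum 'I_k.+1] = take l S ++ drop l.+1 S.
Proof.
have lS : size S = k.+2 by rewrite size_map size_enum_ord.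
have lk := ltn_ord l.
apply: (@eq_from_nth _ (g ord0)) => [|i]; rewrite size_map size_enum_ord.
  by rewrite size_cat size_take size_drop lS lk; lia.
move=> ik; rewrite nth_map_enum // nth_cat size_take lS lk.
case: ltnP => il.
  rewrite nth_take // nth_map_enum; last lia.
  by congr g; apply: val_inj; rewrite /= /bump !inordK ?(leqNgt l i) ?il //; lia.
rewrite nth_drop nth_map_enum; last lia.
by congr g; apply: val_inj; rewrite /= /bump !inordK ?il //; lia.
Qed.

End Splice.

Lemma map_enum_upd (T : eqType) k (l : 'I_k.+2) (g g' : 'I_k.+2 -> T) :
  (forall j, j != l -> g' j = g j) ->
  [seq g' j | j <- enum 'I_k.+2] =
  take l [seq g j | j <- enum 'I_k.+2] ++ g' l :: drop l.+1 [seq g j | j <- enum 'I_k.+2].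
Proof.
move=> gg'; rewrite (map_enum_splice l).
have : [seq g' (lift l j) | j <- enum 'I_k.+1] = [seq g (lift l j) | j <- enum 'I_k.+1].
  by apply: eq_map => j; rewrite gg' // eq_sym neq_lift.
rewrite !map_enum_lift => /eqP; rewrite eqseq_cat; last by rewrite !size_take !size_map.
by case/andP=> /eqP-> /eqP->.
Qed.

Definition fcons (J : finType) k (a : J) (g : {ffun 'I_k -> J}) : {ffun 'I_k.+1 -> J} :=
  [ffun i => if unlift ord0 i is Some j then g j else a].

Lemma fcons0 (J : finType) k (a : J) (g : {ffun 'I_k -> J}) : fcons a g ord0 = a.
Proof. by rewrite ffunE unlift_none. Qed.

Lemma fconsS (J : finType) k (a : J) (g : {ffun 'I_k -> J}) j :
  fcons a g (lift ord0 j) = g j.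
Proof. by rewrite ffunE liftK. Qed.

Lemma sum_ffun_cons (V : nmodType) (J : finType) k (P : 'I_k.+1 -> pred J)
    (F : {ffun 'I_k.+1 -> J} -> V) :
  \sum_(n : {ffun 'I_k.+1 -> J} | [forall l, P l (n l)]) F n =
  \sum_(a | P ord0 a)
    \sum_(g : {ffun 'I_k -> J} | [forall l, P (lift ord0 l) (g l)]) F (fcons a g).
Proof.
rewrite pair_big_dep (reindex (fun p : J * {ffun 'I_k -> J} => fcons p.1 p.2)) /=.
  apply: eq_bigl => -[a g] /=; apply/forallP/andP => [Pn|[Pa /forallP Pg] l].
    split; first by have := Pn ord0; rewrite fcons0.
    by apply/forallP => l; have := Pn (lift ord0 l); rewrite fconsS.
  by case: (unliftP ord0 l) => [j ->|->]; rewrite ?fconsS ?fcons0.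
exists (fun n : {ffun 'I_k.+1 -> J} => (n ord0, [ffun j => n (lift ord0 j)])).
  by move=> [a g] _ /=; rewrite fcons0; congr pair; apply/ffunP => j; rewrite ffunE fconsS.
move=> n _ /=; apply/ffunP => l.
by case: (unliftP ord0 l) => [j ->|->]; rewrite ?fconsS ?fcons0 ?ffunE.
Qed.

Lemma sum_ffun0 (V : nmodType) (J : finType) (P : 'I_0 -> pred J)
    (F : {ffun 'I_0 -> J} -> V) (g0 : {ffun 'I_0 -> J}) :
  \sum_(g : {ffun 'I_0 -> J} | [forall l, P l (g l)]) F g = F g0.
Proof.
apply: big_pred1 => g /=; rewrite (_ : g = g0) ?eqxx; last by apply/ffunP => -[].
by apply/forallP => -[].
Qed.

Section Evolution.
Variables (C : numClosedFieldType) (R : realFieldType) (d : nat).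
Variables (Lam : R -> R -> 'M[C]_d -> 'M[C]_d) (v : 'I_d -> C) (rho : 'M[C]_d).
Hypothesis dynLam : dyn_family Lam.
Local Notation Mx := 'M[C]_d.

Lemma dyn_linear t t' : 0 <= t' -> t' <= t -> linear_map (Lam t t').
Proof. by case: dynLam => cptp _ t'0 t't; case: (cptp _ _ t'0 t't). Qed.

Lemma dyn_cp t t' : 0 <= t' -> t' <= t -> completely_positive (Lam t t').
Proof. by case: dynLam => cptp _ t'0 t't; case: (cptp _ _ t'0 t't). Qed.

Lemma dyn_tp t t' : 0 <= t' -> t' <= t -> trace_preserving (Lam t t').
Proof. by case: dynLam => cptp _ t'0 t't; case: (cptp _ _ t'0 t't). Qed.

Lemma dyn_comp t t' t'' A :
  0 <= t'' -> t'' <= t' -> t' <= t -> Lam t t' (Lam t' t'' A) = Lam t t'' A.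
Proof. by case: dynLam => _ [Lcomp _] t''0 t''t' t't; apply: Lcomp. Qed.

(* [evolve [:: (t1, A1, B1); ...; (tk, Ak, Bk)] tp] is
   Λ_{tp,t1}(A1 Λ_{t1,t2}(⋯ Ak Λ_{tk,0}(ρ) Bk ⋯) B1), the latest time first. *)
Fixpoint evolve (s : seq (R * Mx * Mx)) (tp : R) : Mx :=
  if s is (t, A, B) :: s' then Lam tp t (A *m evolve s' t *m B) else Lam tp 0 rho.

Definition times (s : seq (R * Mx * Mx)) : seq R := [seq x.1.1 | x <- s].

Lemma evolve_comp s t tp :
  chronological (times s) t -> t <= tp -> Lam tp t (evolve s t) = evolve s tp.
Proof.
case: s => [|[[t' A] B] s] /=; first by move=> t0 ttp; rewrite dyn_comp ?lexx.
by case=> t't /chronological_ge0 t'0 ttp; rewrite dyn_comp.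
Qed.

Lemma evolve_drop_id s1 s2 t tp :
  chronological (times s1 ++ t :: times s2) tp ->
  evolve (s1 ++ (t, 1%:M, 1%:M) :: s2) tp = evolve (s1 ++ s2) tp.
Proof.
elim: s1 tp => [|[[t' A] B] s1 IH] tp /=; last by case=> _ /IH->.
by case=> ttp ch; rewrite mul1mx mulmx1 evolve_comp.
Qed.

Lemma evolve_sum (I J : Type) (ra : seq I) (rb : seq J) (A : I -> Mx) (B : J -> Mx)
    s1 s2 t tp :
  chronological (times s1 ++ t :: times s2) tp ->
  \sum_(a <- ra) \sum_(b <- rb) evolve (s1 ++ (t, A a, B b) :: s2) tp =
  evolve (s1 ++ (t, \sum_(a <- ra) A a, \sum_(b <- rb) B b) :: s2) tp.
Proof.
elim: s1 tp => [|[[t' A'] B'] s1 IH] tp /= [t'tp ch];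
  have linL := dyn_linear (chronological_ge0 ch) t'tp.
  rewrite mulmx_suml mulmx_suml linear_map_sum //; apply: eq_bigr => a _.
  by rewrite mulmx_sumr linear_map_sum.
rewrite -IH // mulmx_sumr mulmx_suml linear_map_sum //; apply: eq_bigr => a _.
by rewrite mulmx_sumr mulmx_suml linear_map_sum.
Qed.

Definition history k (xi eta : 'I_k -> C) (t : 'I_k -> R) : seq (R * Mx * Mx) :=
  [seq (t j, eigenproj C v (xi j), eigenproj C v (eta j)) | j <- enum 'I_k].

Definition qweight k (n m : {ffun 'I_k.+1 -> 'I_d}) (t : 'I_k.+1 -> R) : C :=
  Lam (t ord_max) 0 rho (n ord_max) (m ord_max) *
  \prod_(l < k) Tprop Lam (t (widen_ord (leqnSn k) l)) (t (lift ord0 l))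
                  (n (widen_ord (leqnSn k) l)) (m (widen_ord (leqnSn k) l))
                  (n (lift ord0 l)) (m (lift ord0 l)).

Lemma history_cons k (xi eta : 'I_k.+1 -> C) (t : 'I_k.+1 -> R) :
  history xi eta t = (t ord0, eigenproj C v (xi ord0), eigenproj C v (eta ord0)) ::
    history (fun l => xi (lift ord0 l)) (fun l => eta (lift ord0 l)) (fun l => t (lift ord0 l)).
Proof. by rewrite /history enum_ordSl /= -map_comp. Qed.

Lemma qweight_cons k (a b : 'I_d) (g h : {ffun 'I_k.+1 -> 'I_d}) (t : 'I_k.+2 -> R) :
  qweight (fcons a g) (fcons b h) t =
  Lam (t ord0) (t (lift ord0 ord0)) (delta_mx (g ord0) (h ord0)) a b *
  qweight g h (fun l => t (lift ord0 l)).
Proof.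
have w0 : widen_ord (leqnSn k.+1) ord0 = ord0 by apply: val_inj.
have wS l : widen_ord (leqnSn k.+1) (lift ord0 l) = lift ord0 (widen_ord (leqnSn k) l).
  exact: val_inj.
have mS : ord_max = lift ord0 ord_max :> 'I_k.+2 by apply: val_inj.
rewrite /qweight big_ord_recl TpropE w0 mS !fconsS !fcons0.
by under eq_bigr do rewrite wS !fconsS; rewrite mulrCA.
Qed.

Lemma evolve_historyE k (xi eta : 'I_k.+1 -> C) (t : 'I_k.+1 -> R) tp i j :
  times_ok t -> t ord0 <= tp ->
  evolve (history xi eta t) tp i j =
  \sum_(n : {ffun 'I_k.+1 -> 'I_d} | [forall l, v (n l) == xi l])
  \sum_(m : {ffun 'I_k.+1 -> 'I_d} | [forall l, v (m l) == eta l])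
    Lam tp (t ord0) (delta_mx (n ord0) (m ord0)) i j * qweight n m t.
Proof.
elim: k xi eta t tp i j => [|k IH] xi eta t tp i j okt t0tp;
  have linL := dyn_linear (times_ok_ge0 okt ord0) t0tp;
  rewrite history_cons /= linear_map_proj_entry //;
  rewrite (sum_ffun_cons (fun l a => v a == xi l)); apply: eq_bigr => a _.
  have I0 : {ffun 'I_0 -> 'I_d} := ffun0 (card_ord 0).
  rewrite (sum_ffun0 (fun l a => v a == xi (lift ord0 l)) _ I0).
  rewrite (sum_ffun_cons (fun l b => v b == eta l)); apply: eq_bigr => b _.
  rewrite (sum_ffun0 (fun l b => v b == eta (lift ord0 l)) _ I0).
  rewrite /history enum_ord0 /= /qweight big_ord0 mulr1 mulrC.
  have -> : (ord_max : 'I_1) = ord0 by apply: val_inj.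
  by rewrite !fcons0.
rewrite (eq_bigr _ (fun g _ => sum_ffun_cons (fun l b => v b == eta l) _)).
rewrite exchange_big /=; apply: eq_bigr => b _.
have t1t0 : t (lift ord0 ord0) <= t ord0 by apply: times_ok_le.
rewrite IH //; last exact: times_ok_lift.
rewrite mulr_suml; apply: eq_bigr => g _; rewrite mulr_suml; apply: eq_bigr => h _.
by rewrite qweight_cons !fcons0 mulrC.
Qed.

Lemma chronological_history k (xi eta : 'I_k.+1 -> C) (t : 'I_k.+1 -> R) tp :
  times_ok t -> t ord0 <= tp -> chronological (times (history xi eta t)) tp.
Proof.
elim: k xi eta t tp => [|k IH] xi eta t tp okt t0tp; rewrite history_cons /=; split=> //.
  by rewrite /history enum_ord0; apply: times_ok_ge0.
by apply: IH; [apply: times_ok_lift | apply: times_ok_le].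
Qed.

Lemma qtildeE k (xi eta : 'I_k.+1 -> C) (t : 'I_k.+1 -> R) :
  qtilde Lam v rho xi eta t =
  \sum_(n : {ffun 'I_k.+1 -> 'I_d} | [forall l, v (n l) == xi l])
  \sum_(m : {ffun 'I_k.+1 -> 'I_d} | [forall l, v (m l) == eta l])
    (n ord0 == m ord0)%:R * qweight n m t.
Proof. by apply: eq_bigr => n _; apply: eq_bigr => m _; rewrite mulrA. Qed.

Lemma mxtrace_evolve_history k (xi eta : 'I_k.+1 -> C) (t : 'I_k.+1 -> R) tp :
  times_ok t -> t ord0 <= tp ->
  \tr (evolve (history xi eta t) tp) = qtilde Lam v rho xi eta t.
Proof.
move=> okt t0tp; rewrite qtildeE /mxtrace; under eq_bigr do rewrite evolve_historyE //.
rewrite exchange_big; apply: eq_bigr => n _; rewrite exchange_big; apply: eq_bigr => m _.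
rewrite -mulr_suml -/(\tr _) dyn_tp ?mxtrace_delta //; exact: times_ok_ge0.
Qed.

Lemma qtilde_sum1 (t : 'I_1 -> R) :
  times_ok t -> \tr rho = 1 ->
  \sum_(a <- Omega v) \sum_(b <- Omega v) qtilde Lam v rho (fun=> a) (fun=> b) t = 1.
Proof.
move=> okt trrho; have t00 := times_ok_ge0 okt ord0.
transitivity (\tr (\sum_(a <- Omega v) \sum_(b <- Omega v)
    evolve ([::] ++ (t ord0, eigenproj C v a, eigenproj C v b) :: [::]) (t ord0))).
  rewrite !raddf_sum; apply: eq_bigr => a _; rewrite raddf_sum; apply: eq_bigr => b _.
  by rewrite -(mxtrace_evolve_history _ _ okt (lexx (t ord0))) history_cons /history enum_ord0.
rewrite evolve_sum /=; last by rewrite lexx.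
by rewrite !sum_eigenproj mul1mx mulmx1 !dyn_tp ?lexx.
Qed.

Lemma qtilde_consistent k (xi eta : 'I_k.+2 -> C) (t : 'I_k.+2 -> R) (l : 'I_k.+2) :
  times_ok t ->
  \sum_(a <- Omega v) \sum_(b <- Omega v) qtilde Lam v rho (upd xi l a) (upd eta l b) t
  = qtilde Lam v rho (fun j => xi (lift l j)) (fun j => eta (lift l j))
                     (fun j => t (lift l j)).
Proof.
move=> okt; set H := history xi eta t.
have chron : chronological (times (take l H) ++ t l :: times (drop l.+1 H)) (t ord0).
  have := chronological_history xi eta okt (lexx _).
  by rewrite [history _ _ _](map_enum_splice l) /times map_cat.
have H_upd a b : history (upd xi l a) (upd eta l b) t =
    take l H ++ (t l, eigenproj C v a, eigenproj C v b) :: drop l.+1 H.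
  rewrite /history (map_enum_upd (l := l)
    (g := fun j => (t j, eigenproj C v (xi j), eigenproj C v (eta j)))) /upd ?eqxx //.
  by move=> j /negbTE->.
have H_lift : history (fun j => xi (lift l j)) (fun j => eta (lift l j))
    (fun j => t (lift l j)) = take l H ++ drop l.+1 H by exact: map_enum_lift.
transitivity (\tr (\sum_(a <- Omega v) \sum_(b <- Omega v)
    evolve (take l H ++ (t l, eigenproj C v a, eigenproj C v b) :: drop l.+1 H) (t ord0))).
  rewrite !raddf_sum; apply: eq_bigr => a _; rewrite raddf_sum; apply: eq_bigr => b _.
  by rewrite -(mxtrace_evolve_history _ _ okt (lexx (t ord0))) H_upd.
rewrite evolve_sum // !sum_eigenproj evolve_drop_id // -H_lift.
by rewrite mxtrace_evolve_history //; [apply: times_ok_lift | apply: times_ok_le].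
Qed.

Lemma ptilde_ge0 k (xi : 'I_k.+1 -> C) (t : 'I_k.+1 -> R) :
  times_ok t -> psdf (fun i j => rho i j) -> 0 <= ptilde Lam v rho xi t.
Proof.
move=> okt psdrho; apply: sumr_ge0 => n _; apply: mulr_ge0.
  by apply: (cp_diag_ge0 _ _ psdrho); apply: dyn_cp; rewrite ?lexx ?times_ok_ge0.
apply: prodr_ge0 => l _; apply: (cp_diag_ge0 _ _ (psdf_delta _)).
by apply: dyn_cp; [apply: times_ok_ge0 | apply: times_ok_le].
Qed.

Hypothesis dephLam : dephasing Lam.

(* At the first index where n and m differ, the propagator leading into it
   maps the coherence |n⟩⟨m| there to a matrix with zero diagonal. *)
Lemma qweight_offdiag k (n m : {ffun 'I_k.+1 -> 'I_d}) (t : 'I_k.+1 -> R) :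
  times_ok t -> n ord0 = m ord0 -> n != m -> qweight n m t = 0.
Proof.
move=> okt nm0 nm.
have /existsP[j nmj] : [exists j, n j != m j].
  by rewrite -negb_forall; apply: contra nm => /forallP eqnm; apply/eqP/ffunP => j; apply/eqP.
case: (arg_minnP (P := fun i => n i != m i) (nat_of_ord (n:=k.+1)) nmj) => i0 nmi0 min_i0.
case: (unliftP ord0 i0) nmi0 min_i0 => [lo ->|->]; last by rewrite nm0 eqxx.
move=> nmlo min_lo; pose wlo := widen_ord (leqnSn k) lo.
have nm_wlo : n wlo = m wlo.
  by apply/eqP/contraT => /min_lo; rewrite /= /bump leq0n add1n ltnn.
have [tlo_ge0 tlo_le] : 0 <= t (lift ord0 lo) /\ t (lift ord0 lo) <= t wlo.
  by split; [apply: times_ok_ge0 | apply: times_ok_le => //=; rewrite /bump leq0n].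
rewrite /qweight (bigD1 (lo : 'I_k)) //= TpropE -/wlo nm_wlo.
by rewrite ((dephLam tlo_ge0 tlo_le).2 _ _ nmlo) mul0r mulr0.
Qed.

Lemma qtilde_dephased k (xi eta : 'I_k.+1 -> C) (t : 'I_k.+1 -> R) :
  times_ok t ->
  qtilde Lam v rho xi eta t = [forall l, xi l == eta l]%:R * ptilde Lam v rho xi t.
Proof.
move=> okt; rewrite qtildeE /ptilde mulr_sumr; apply: eq_bigr => n vn.
have vn_eta : [forall l, v (n l) == eta l] = [forall l, xi l == eta l].
  by apply: eq_forallb => l; rewrite (eqP (forallP vn l)).
rewrite big_mkcond (bigD1 n) //= big1 ?addr0 => [|m mn]; last first.
  case: ifP => // _; case: eqVneq => [nm0|]; last by rewrite mul0r.
  by rewrite qweight_offdiag ?mulr0 // eq_sym.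
rewrite vn_eta eqxx mul1r; case: [forall l, _] => /=; rewrite ?mul1r ?mul0r //.
by rewrite /qweight; congr (_ * _); apply: eq_bigr => l _; rewrite TpropE.
Qed.

Lemma qtilde_diag k (xi : 'I_k.+1 -> C) (t : 'I_k.+1 -> R) :
  times_ok t -> qtilde Lam v rho xi xi t = ptilde Lam v rho xi t.
Proof.
move=> okt; rewrite qtilde_dephased //.
by rewrite (_ : [forall l, _] = true) ?mul1r //; apply/forallP.
Qed.

End Evolution.

Lemma forall_upd_eq (T : eqType) k (f : 'I_k -> T) (l : 'I_k) (a b : T) :
  [forall j, upd f l a j == upd f l b j] = (a == b).
Proof. by apply/forallP/eqP => [/(_ l)|->//]; rewrite /upd eqxx => /eqP. Qed.

Lemma forall_const1 (T : eqType) (a b : T) : [forall l : 'I_1, a == b] = (a == b).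
Proof. by apply/forallP/idP => [/(_ ord0)|]. Qed.

Theorem mainTheorem5 (C : numClosedFieldType) (R : realFieldType) (d : nat)
    (Lam : R -> R -> 'M[C]_d -> 'M[C]_d) (v : 'I_d -> C) (rho : 'M[C]_d) :
  dyn_family Lam -> density rho ->
  ((forall t : 'I_1 -> R, times_ok t ->
      \sum_(a <- Omega v) \sum_(b <- Omega v)
         qtilde Lam v rho (fun _ => a) (fun _ => b) t = 1) /\
   (forall (k : nat) (xi eta : 'I_k.+2 -> C) (t : 'I_k.+2 -> R) (l : 'I_k.+2),
      times_ok t ->
      \sum_(a <- Omega v) \sum_(b <- Omega v)
         qtilde Lam v rho (upd xi l a) (upd eta l b) t
      = qtilde Lam v rho (fun j => xi (lift l j)) (fun j => eta (lift l j))
                         (fun j => t (lift l j)))) /\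
  (dephasing Lam ->
   (forall (k : nat) (xi eta : 'I_k.+1 -> C) (t : 'I_k.+1 -> R), times_ok t ->
      qtilde Lam v rho xi eta t
      = ([forall l, xi l == eta l])%:R * ptilde Lam v rho xi t) /\
   (forall (k : nat) (xi : 'I_k.+1 -> C) (t : 'I_k.+1 -> R), times_ok t ->
      0 <= ptilde Lam v rho xi t) /\
   (forall t : 'I_1 -> R, times_ok t ->
      \sum_(a <- Omega v) ptilde Lam v rho (fun _ => a) t = 1) /\
   (forall (k : nat) (xi : 'I_k.+2 -> C) (t : 'I_k.+2 -> R) (l : 'I_k.+2),
      times_ok t ->
      \sum_(a <- Omega v) ptilde Lam v rho (upd xi l a) t
      = ptilde Lam v rho (fun j => xi (lift l j)) (fun j => t (lift l j)))).
Proof.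
move=> dynLam [psdrho trrho]; split.
  split=> [t okt | k xi eta t l okt]; first exact: qtilde_sum1.
  exact: qtilde_consistent.
move=> dephLam; split=> [k xi eta t okt|]; first exact: qtilde_dephased.
split=> [k xi t okt|]; first exact: ptilde_ge0.
split=> [t okt | k xi t l okt].
  rewrite -(qtilde_sum1 v dynLam okt trrho); apply/esym/sum_diagonal_seq => [|a b].
    exact: undup_uniq.
  by rewrite qtilde_dephased // forall_const1.
rewrite -qtilde_diag //; last exact: times_ok_lift.
rewrite -qtilde_consistent //.
apply/esym/sum_diagonal_seq => [|a b]; first exact: undup_uniq.
by rewrite qtilde_dephased // forall_upd_eq.
Qed.
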